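(* Let $G$ be a graph of minimum degree at least $2$, and let $\Omega$ be a total $2$-coalition partition of $G$. Then (i) $\Delta(\mathrm{TC}_2\mathrm{G}(G,\Omega))\le \Delta(G)-1$, and (ii) $\beta(\mathrm{TC}_2\mathrm{G}(G,\Omega))\le \delta(G)-1$.
   Context: All graphs are finite, simple and connected. $N(v)$ denotes the open neighborhood of $v$. A set $S\subseteq V(G)$ is a total $2$-dominating set if $|N(v)\cap S|\ge 2$ for every $v\in V(G)$. Two disjoint sets $U,W\subseteq V(G)$ form a total $2$-coalition if neither is a total $2$-dominating set but $U\cup W$ is. A total $2$-coalition partition of $G$ is a partition $\Omega$ of $V(G)$ in which every set forms a total $2$-coalition with some other set of $\Omega$. The total $2$-coalition graph $\mathrm{TC}_2\mathrm{G}(G,\Omega)$ has vertex set $\Omega$, two sets being adjacent if they form a total $2$-coalition in $G$. $\Delta(H)$ is the maximum degree and $\beta(H)$ the vertex cover number of a graph $H$. *)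

From mathcomp Require Import all_boot.
Set Implicit Arguments. Unset Strict Implicit. Unset Printing Implicit Defensive.

Definition simple_graph (T : finType) (e : rel T) : Prop :=
  symmetric e /\ irreflexive e.
Definition connected_graph (T : finType) (e : rel T) : Prop :=
  forall x y : T, connect e x y.

Definition nbhd (T : finType) (e : rel T) (v : T) : {set T} := [set u | e v u].
Definition deg (T : finType) (e : rel T) (v : T) : nat := #|nbhd e v|.

Definition maxdeg (T : finType) (e : rel T) : nat := \max_(v : T) deg e v.
Definition mindeg (T : finType) (e : rel T) : nat :=
  \big[minn/#|T|]_(v : T) deg e v.

Definition total2dom (T : finType) (e : rel T) (S : {set T}) : bool :=
  [forall v : T, 2 <= #|nbhd e v :&: S|].

Definition total2coal (T : finType) (e : rel T) (U W : {set T}) : bool :=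
  [&& [disjoint U & W], ~~ total2dom e U, ~~ total2dom e W
    & total2dom e (U :|: W)].

Definition total2coal_partition (T : finType) (e : rel T)
  (Om : {set {set T}}) : bool :=
  partition Om [set: T] &&
  [forall U in Om, exists W in Om, total2coal e U W].

Definition tc2g_adj (T : finType) (e : rel T) (Om : {set {set T}})
  (X Y : {set T}) : bool :=
  [&& X \in Om, Y \in Om & total2coal e X Y].

Definition tc2g_maxdeg (T : finType) (e : rel T) (Om : {set {set T}}) : nat :=
  \max_(X in Om) #|[set Y in Om | tc2g_adj e Om X Y]|.

Definition tc2g_vcover (T : finType) (e : rel T) (Om C : {set {set T}}) : bool :=
  (C \subset Om) &&
  [forall X in Om, forall Y in Om, tc2g_adj e Om X Y ==> (X \in C) || (Y \in C)].

Definition tc2g_vcnum (T : finType) (e : rel T) (Om : {set {set T}}) : nat :=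
  \big[minn/#|Om|]_(C : {set {set T}} | tc2g_vcover e Om C) #|C|.

From mathcomp Require Import all_boot order zify.

Set Implicit Arguments.
Unset Strict Implicit.
Unset Printing Implicit Defensive.
Import Order.TotalTheory.

(* If a block X is not total 2-dominating, some vertex v has at most one
   neighbour u in X.  Every coalition partner Y of X must then give v a
   neighbour in N(v) \ {u}, and distinct partners are disjoint blocks, so X
   has at most deg v - 1 partners.  Likewise, for v of minimum degree and any
   u in N(v), the blocks meeting N(v) \ {u} cover every coalition X ∪ Y,
   because X ∪ Y contains two neighbours of v. *)

Definition blocks_meeting (T : finType) (P : {set {set T}}) (A : {set T}) :
  {set {set T}} := [set B in P | ~~ [disjoint B & A]].

Lemma card_blocks_meeting (T : finType) (P : {set {set T}}) (A : {set T}) :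
  trivIset P -> #|blocks_meeting P A| <= #|A|.
Proof.
move=> trivP; apply: leq_trans (leq_imset_card (pblock P) A).
apply/subset_leq_card/subsetP => B.
rewrite inE => /andP[PB /pred0Pn[a /andP[Ba Aa]]].
by apply/imsetP; exists a; rewrite ?(def_pblock trivP PB Ba).
Qed.

Lemma exists_disjoint_setD1 (T : finType) (A X : {set T}) :
  #|A :&: X| <= 1 -> A != set0 -> exists2 u, u \in A & [disjoint A :\ u & X].
Proof.
move=> /card_le1_eqP AX1 /set0Pn[a Aa].
have [x AXx | AX0] := pickP [in A :&: X].
  have /setIP[Ax _] := AXx; exists x => //.
  apply/pred0Pn => -[y /andP/= [/setD1P[yx Ay] Xy]].
  by move: yx; rewrite (AX1 x y AXx) ?inE ?Ay ?Xy ?eqxx.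
exists a => //; apply/pred0Pn => -[y /andP/= [/setD1P[_ Ay] Xy]].
by move: (AX0 y); rewrite /= inE Ay Xy.
Qed.

Lemma total2dom_meets_nbhdD1 (T : finType) (e : rel T) (S : {set T}) v u :
  total2dom e S -> ~~ [disjoint S & nbhd e v :\ u].
Proof.
move=> /forallP/(_ v) twoS; rewrite -setI_eq0 -card_gt0 setIDA setIC.
by move: twoS; rewrite (cardsD1 u); case: (u \in _) => /=; lia.
Qed.

Lemma mindeg_le_deg (T : finType) (e : rel T) v : mindeg e <= deg e v.
Proof. exact: (@bigmin_le _ nat). Qed.

Lemma mindeg_attained (T : finType) (e : rel T) :
  0 < mindeg e -> exists v, deg e v = mindeg e.
Proof.
move=> mindeg_gt0; have /card_gt0P[v0 _] : 0 < #|T|.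
  by apply: leq_trans mindeg_gt0 (@bigmin_le_id _ nat _ _ _ _ _).
have [v _ minv] :=
  @eq_bigmin _ nat _ #|T| v0 predT (deg e) isT (fun v _ => max_card _).
by exists v; rewrite /mindeg -minEnat minv.
Qed.

Lemma card_nbhdD1 (T : finType) (e : rel T) v u :
  u \in nbhd e v -> #|nbhd e v :\ u| = deg e v - 1.
Proof. by move=> Nu; rewrite /deg (cardsD1 u (nbhd e v)) Nu addKn. Qed.

Lemma total2coal_blocks_meeting (T : finType) (e : rel T) Om X Y v u :
  tc2g_adj e Om X Y ->
  (X \in blocks_meeting Om (nbhd e v :\ u)) ||
  (Y \in blocks_meeting Om (nbhd e v :\ u)).
Proof.
case/and3P=> XOm YOm /and4P[_ _ _ /(total2dom_meets_nbhdD1 v u)].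
by rewrite !inE XOm YOm -!setI_eq0 setIUl setU_eq0 negb_and.
Qed.

Lemma tc2g_vcover_blocks_meeting (T : finType) (e : rel T) Om v u :
  tc2g_vcover e Om (blocks_meeting Om (nbhd e v :\ u)).
Proof.
apply/andP; split; first by apply/subsetP => B; rewrite inE => /andP[].
apply/forall_inP => X _; apply/forall_inP => Y _.
exact/implyP/total2coal_blocks_meeting.
Qed.

Lemma tc2g_vcnum_le_deg (T : finType) (e : rel T) Om v u :
  trivIset Om -> u \in nbhd e v -> tc2g_vcnum e Om <= deg e v - 1.
Proof.
move=> trivOm Nu; rewrite -(card_nbhdD1 Nu).
apply: leq_trans (card_blocks_meeting _ trivOm).
exact: (@bigmin_le_cond _ nat) (tc2g_vcover_blocks_meeting e Om v u).
Qed.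

Lemma tc2g_deg_le_deg (T : finType) (e : rel T) Om X v :
  trivIset Om -> #|nbhd e v :&: X| <= 1 -> 0 < deg e v ->
  #|[set Y in Om | tc2g_adj e Om X Y]| <= deg e v - 1.
Proof.
rewrite /deg card_gt0 => trivOm NX1 /(exists_disjoint_setD1 NX1)[u Nu].
rewrite disjoint_sym => XN; rewrite -(card_nbhdD1 Nu).
apply: leq_trans (card_blocks_meeting _ trivOm).
apply/subset_leq_card/subsetP => Y; rewrite inE => /andP[_ adjXY].
by have := total2coal_blocks_meeting v u adjXY; rewrite [X \in _]inE XN andbF.
Qed.

Theorem lemma3p4 (T : finType) (e : rel T) (Om : {set {set T}}) :
  simple_graph e -> connected_graph e ->
  2 <= mindeg e ->
  total2coal_partition e Om ->
  tc2g_maxdeg e Om <= maxdeg e - 1 /\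
  tc2g_vcnum e Om <= mindeg e - 1.
Proof.
move=> _ _ mindeg2 /andP[/and3P[_ trivOm _] /forall_inP coal].
have deg_gt0 v : 0 < deg e v by apply: leq_trans (ltnW mindeg2) (mindeg_le_deg e v).
split.
- apply/bigmax_leqP => X XOm.
  have [Y _ /and4P[_ ndomX _ _]] := exists_inP (coal X XOm).
  have [v NX1] : exists v, #|nbhd e v :&: X| <= 1.
    by move: ndomX; rewrite negb_forall => /existsP[v]; rewrite -ltnNge ltnS; exists v.
  apply: leq_trans (tc2g_deg_le_deg trivOm NX1 (deg_gt0 v)) _.
  by rewrite leq_sub2r // leq_bigmax.
- have [v <-] := mindeg_attained (ltnW mindeg2).
  have /card_gt0P[u Nu] := deg_gt0 v.
  exact: tc2g_vcnum_le_deg trivOm Nu.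
Qed.
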